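(* Under the setting in the context, let $z^\star\in H$ satisfy $a(z^\star,v)=b(v)$ for all $v\in H$ and $\operatorname{dist}(z^\star,V_k)\le\hat\epsilon_k$ for all $k=0,\dots,n$, and let $z_{\mathrm{MS}}$ be any solution of (MS). Then $f(P_{V_n}z^\star)\le\gamma^2\epsilon_n^2$ and $f(z_{\mathrm{MS}})\le\gamma^2\epsilon_n^2$. Moreover, writing $P_{V_n}z^\star-z_{\mathrm{MS}}=\sum_{j=1}^n\beta_jv_j^*$ with $\beta_j=\langle v_j^*,P_{V_n}z^\star-z_{\mathrm{MS}}\rangle$, one has $\sum_{j=1}^n\sigma_j^2\beta_j^2\le4\gamma^2\epsilon_n^2$.
   Context: $H$ is a real Hilbert space, $a:H\times H\to\mathbb R$ bilinear, $b:H\to\mathbb R$ linear. $V_0\subset\dots\subset V_n\subset H$ are subspaces with $\dim V_k=k$ and orthonormal basis $\{v_1,\dots,v_n\}$ of $V_n$ with $V_k=\operatorname{span}\{v_1,\dots,v_k\}$; $P_{V_n}$ is the orthogonal projector onto $V_n$. $Z_m$ is a subspace of dimension $m\ge n$ with orthonormal basis $\{z_1,\dots,z_m\}$. Each $a(\cdot,z_j)$ is continuous with Riesz representer $r_j$, i.e. $a(v,z_j)=\langle r_j,v\rangle$ for all $v$. $G\in\mathbb R^{m\times n}$, $G_{ij}=\langle r_i,v_j\rangle$, has SVD $G=U\Lambda X^T$ with $U,X=(x_{ij})$ orthogonal and singular values $\sigma_1\ge\dots\ge\sigma_n\ge0$ on the diagonal of $\Lambda$. Set $v_j^*=\sum_{i=1}^n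 x_{ij}v_i$ ($j=1,\dots,n$). Given positive $\hat\epsilon_0,\dots,\hat\epsilon_n$, problem (MS) is: minimize $f(v)=\sum_{j=1}^m(b(z_j)-a(v,z_j))^2$ over $v\in V_n$ subject to $\operatorname{dist}(v,V_k)\le\hat\epsilon_k$, $k=0,\dots,n$. $\epsilon_n=\operatorname{dist}(z^\star,V_n)$ and $\gamma=\sup\{(\sum_{j=1}^m\langle r_j,v\rangle^2)^{1/2}: v\in V_n^\perp,\|v\|=1\}$. *)

From Stdlib Require Import Reals Lra Lia Classical ClassicalEpsilon.
Open Scope R_scope.

Record Hilbert := {
  hcar :> Type;
  hzero : hcar;
  hadd : hcar -> hcar -> hcar;
  hscal : R -> hcar -> hcar;
  hinner : hcar -> hcar -> R;
  hadd_assoc : forall x y z, hadd x (hadd y z) = hadd (hadd x y) z;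
  hadd_comm : forall x y, hadd x y = hadd y x;
  hadd_0 : forall x, hadd x hzero = x;
  hadd_opp : forall x, hadd x (hscal (-1) x) = hzero;
  hscal_1 : forall x, hscal 1 x = x;
  hscal_assoc : forall a b x, hscal a (hscal b x) = hscal (a * b) x;
  hscal_distr_l : forall a x y, hscal a (hadd x y) = hadd (hscal a x) (hscal a y);
  hscal_distr_r : forall a b x, hscal (a + b) x = hadd (hscal a x) (hscal b x);
  hinner_sym : forall x y, hinner x y = hinner y x;
  hinner_add : forall x y z, hinner (hadd x y) z = hinner x z + hinner y z;
  hinner_scal : forall a x y, hinner (hscal a x) y = a * hinner x y;
  hinner_pos : forall x, 0 <= hinner x x;
  hinner_def : forall x, hinner x x = 0 -> x = hzero;
  hcomplete : forall u : nat -> hcar,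
    (forall eps, eps > 0 -> exists N, forall p q, (p >= N)%nat -> (q >= N)%nat ->
        sqrt (hinner (hadd (u p) (hscal (-1) (u q))) (hadd (u p) (hscal (-1) (u q)))) < eps) ->
    exists l, forall eps, eps > 0 -> exists N, forall p, (p >= N)%nat ->
        sqrt (hinner (hadd (u p) (hscal (-1) l)) (hadd (u p) (hscal (-1) l))) < eps
}.

Arguments hzero {h}.
Arguments hadd {h}.
Arguments hscal {h}.
Arguments hinner {h}.

Definition hsub {H : Hilbert} (x y : H) : H := hadd x (hscal (-1) y).
Definition hnorm {H : Hilbert} (x : H) : R := sqrt (hinner x x).

Fixpoint sum1 (n : nat) (f : nat -> R) : R :=
  match n with O => 0 | S k => sum1 k f + f (S k) end.

Fixpoint vsum1 {H : Hilbert} (n : nat) (f : nat -> H) : H :=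
  match n with O => hzero | S k => hadd (vsum1 k f) (f (S k)) end.

Definition span1 {H : Hilbert} (v : nat -> H) (k : nat) (x : H) : Prop :=
  exists c : nat -> R, x = vsum1 k (fun i => hscal (c i) (v i)).

(* supremum / infimum of a set of reals (chosen classically;
   the value is only meaningful when the sup/inf exists) *)
Definition Rsup (E : R -> Prop) : R := epsilon (inhabits 0) (fun s => is_lub E s).
Definition Rinf (E : R -> Prop) : R := - Rsup (fun y => E (- y)).

Definition hdist {H : Hilbert} (x : H) (S : H -> Prop) : R :=
  Rinf (fun d => exists y, S y /\ d = hnorm (hsub x y)).

Definition orth_proj {H : Hilbert} (S : H -> Prop) (x : H) : H :=
  epsilon (inhabits hzero) (fun p => S p /\ forall y, S y -> hinner (hsub x p) y = 0).

(* The error zstar - P zstar of the orthogonal projection P onto V_n is orthogonal to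
   V_n, so by definition of gamma its residual f is at most gamma^2 eps_n^2.  P zstar
   is feasible for (MS), since projecting onto V_n cannot increase the distances to the
   nested spaces V_k; hence the minimiser zMS does at least as well.  In the right
   singular basis v_j^* the form w |-> sum_j <r_j, w>^2 restricted to V_n is diagonal
   with weights sigma_j^2, and P zstar - zMS = (zstar - zMS) - (zstar - P zstar) gives
   the factor 4. *)
From Stdlib Require Import Reals Lra Lia ClassicalEpsilon.
Open Scope R_scope.

Section InnerProduct.
Context {H : Hilbert}.

Lemma inner_addr (x y w : H) : hinner x (hadd y w) = hinner x y + hinner x w.
Proof. rewrite hinner_sym, hinner_add, (hinner_sym _ _ y), (hinner_sym _ _ w). ring. Qed.

Lemma inner_scalr c (x y : H) : hinner x (hscal c y) = c * hinner x y.
Proof. rewrite hinner_sym, hinner_scal, hinner_sym. ring. Qed.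

Lemma inner_subl (x y w : H) : hinner (hsub x y) w = hinner x w - hinner y w.
Proof. unfold hsub. rewrite hinner_add, hinner_scal. ring. Qed.

Lemma inner_subr (x y w : H) : hinner w (hsub x y) = hinner w x - hinner w y.
Proof. rewrite hinner_sym, inner_subl, !(hinner_sym _ w). ring. Qed.

Lemma inner_0l (y : H) : hinner hzero y = 0.
Proof.
  assert (E : hinner (hadd hzero hzero) y = hinner (@hzero H) y + hinner hzero y)
    by apply hinner_add.
  rewrite hadd_0 in E. lra.
Qed.

Lemma inner_0r (y : H) : hinner y hzero = 0.
Proof. rewrite hinner_sym. apply inner_0l. Qed.

Lemma inner_add_add (x y : H) :
  hinner (hadd x y) (hadd x y) = hinner x x + 2 * hinner x y + hinner y y.
Proof. rewrite hinner_add, !inner_addr, (hinner_sym _ y x). ring. Qed.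

Lemma inner_sub_sub (x y : H) :
  hinner (hsub x y) (hsub x y) = hinner x x - 2 * hinner x y + hinner y y.
Proof. rewrite inner_subl, !inner_subr, (hinner_sym _ y x). ring. Qed.

Lemma hext (x y : H) : (forall w, hinner x w = hinner y w) -> x = y.
Proof.
  intros Hw.
  assert (E : hinner (hsub x y) (hsub x y) = 0) by (rewrite inner_subl, Hw; ring).
  apply hinner_def in E. unfold hsub in E.
  rewrite <- (hadd_0 _ x), <- (hadd_opp _ y), (hadd_comm _ y (hscal (-1) y)), hadd_assoc, E.
  rewrite hadd_comm, hadd_0. reflexivity.
Qed.

Lemma hsub_split (x p y : H) : hsub x y = hadd (hsub x p) (hsub p y).
Proof. apply hext; intros w. rewrite hinner_add, !inner_subl. ring. Qed.

Lemma hnorm_sq (x : H) : hnorm x ^ 2 = hinner x x.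
Proof. apply pow2_sqrt, hinner_pos. Qed.

Lemma hnorm_le_add_orth (u w : H) : hinner u w = 0 -> hnorm w <= hnorm (hadd u w).
Proof.
  intros Huw. apply sqrt_le_1_alt. rewrite inner_add_add, Huw.
  pose proof (hinner_pos _ u). lra.
Qed.

Lemma inner_vsum k (f : nat -> H) y : hinner (vsum1 k f) y = sum1 k (fun i => hinner (f i) y).
Proof. induction k; simpl; [apply inner_0l | rewrite hinner_add, IHk; reflexivity]. Qed.

Lemma vsum1_ext k (f g : nat -> H) :
  (forall i, (1 <= i <= k)%nat -> f i = g i) -> vsum1 k f = vsum1 k g.
Proof.
  induction k; intros E; simpl; [reflexivity|].
  rewrite IHk, E; [reflexivity | lia | intros; apply E; lia].
Qed.

End InnerProduct.

Section FiniteSums.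

Lemma sum1_ext k f g : (forall i, (1 <= i <= k)%nat -> f i = g i) -> sum1 k f = sum1 k g.
Proof.
  induction k; intros E; simpl; [reflexivity|].
  rewrite IHk, E; [reflexivity | lia | intros; apply E; lia].
Qed.

Lemma sum1_plus k f g : sum1 k (fun i => f i + g i) = sum1 k f + sum1 k g.
Proof. induction k; simpl; [ring | rewrite IHk; ring]. Qed.

Lemma sum1_minus k f g : sum1 k (fun i => f i - g i) = sum1 k f - sum1 k g.
Proof. induction k; simpl; [ring | rewrite IHk; ring]. Qed.

Lemma sum1_scal k c f : sum1 k (fun i => c * f i) = c * sum1 k f.
Proof. induction k; simpl; [ring | rewrite IHk; ring]. Qed.

Lemma sum1_scalr k c f : sum1 k (fun i => f i * c) = sum1 k f * c.
Proof. induction k; simpl; [ring | rewrite IHk; ring]. Qed.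

Lemma sum1_zero k f : (forall i, (1 <= i <= k)%nat -> f i = 0) -> sum1 k f = 0.
Proof.
  intros E. rewrite (sum1_ext k f (fun _ => 0)) by auto.
  clear; induction k; simpl; lra.
Qed.

Lemma sum1_le k f g : (forall i, (1 <= i <= k)%nat -> f i <= g i) -> sum1 k f <= sum1 k g.
Proof.
  induction k; intros E; simpl; [lra|].
  apply Rplus_le_compat; [apply IHk; intros; apply E | apply E]; lia.
Qed.

Lemma sum1_nonneg k f : (forall i, (1 <= i <= k)%nat -> 0 <= f i) -> 0 <= sum1 k f.
Proof.
  intros E. rewrite <- (sum1_zero k (fun _ => 0)) by reflexivity. apply sum1_le, E.
Qed.

Lemma sum1_delta k f j :
  (1 <= j <= k)%nat -> sum1 k (fun i => f i * (if Nat.eqb i j then 1 else 0)) = f j.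
Proof.
  induction k; intros Hj; [lia|].
  change (sum1 (S k) ?g) with (sum1 k g + g (S k)).
  destruct (Nat.eq_dec j (S k)) as [->|Hne].
  - rewrite Nat.eqb_refl, sum1_zero; [ring|].
    intros i Hi. replace (Nat.eqb i (S k)) with false by (symmetry; apply Nat.eqb_neq; lia). ring.
  - rewrite IHk by lia.
    replace (Nat.eqb (S k) j) with false by (symmetry; apply Nat.eqb_neq; lia). ring.
Qed.

Lemma sum1_swap p q F :
  sum1 p (fun i => sum1 q (fun j => F i j)) = sum1 q (fun j => sum1 p (fun i => F i j)).
Proof.
  induction p; simpl; [symmetry; apply sum1_zero; auto|].
  rewrite IHp, <- sum1_plus. reflexivity.
Qed.

Lemma sum1_sq_sub_le k f g :
  sum1 k (fun i => (f i - g i) ^ 2) <= 2 * sum1 k (fun i => f i ^ 2) + 2 * sum1 k (fun i => g i ^ 2).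
Proof.
  rewrite <- !sum1_scal, <- sum1_plus. apply sum1_le; intros i _.
  pose proof (pow2_ge_0 (f i + g i)). nra.
Qed.

Lemma sum1_orthonormal_cols p q (Q : nat -> nat -> R) a c :
  (forall i j, (1 <= i <= q)%nat -> (1 <= j <= q)%nat ->
     sum1 p (fun k => Q k i * Q k j) = if Nat.eqb i j then 1 else 0) ->
  sum1 p (fun k => sum1 q (fun l => Q k l * a l) * sum1 q (fun l => Q k l * c l))
  = sum1 q (fun l => a l * c l).
Proof.
  intros Horth.
  transitivity (sum1 p (fun k => sum1 q (fun l => sum1 q (fun l' => Q k l * a l * (Q k l' * c l'))))).
  { apply sum1_ext; intros k _. rewrite <- sum1_scalr. apply sum1_ext; intros l _.
    rewrite <- sum1_scal. reflexivity. }
  rewrite sum1_swap. apply sum1_ext; intros l Hl.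
  rewrite sum1_swap, <- (sum1_delta q (fun l' => a l * c l') l Hl).
  apply sum1_ext; intros l' Hl'.
  transitivity (a l * c l' * sum1 p (fun k => Q k l * Q k l')).
  { rewrite <- sum1_scal. apply sum1_ext; intros. ring. }
  rewrite Horth, Nat.eqb_sym by lia. reflexivity.
Qed.

End FiniteSums.

Lemma Rsup_max (E : R -> Prop) M : E M -> (forall y, E y -> y <= M) -> Rsup E = M.
Proof.
  intros HM Hub.
  assert (L : is_lub E M) by (split; [exact Hub | intros c Hc; apply Hc, HM]).
  destruct (epsilon_spec (inhabits 0) (fun s => is_lub E s) (ex_intro _ M L)) as [H1 H2].
  apply Rle_antisym; [apply H2; exact Hub | apply H1; exact HM].
Qed.

Lemma Rinf_min (E : R -> Prop) M : E M -> (forall y, E y -> M <= y) -> Rinf E = M.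
Proof.
  intros HM Hlb. unfold Rinf. rewrite (Rsup_max _ (- M)); [ring | |].
  - rewrite Ropp_involutive; exact HM.
  - intros y Hy. apply Hlb in Hy. lra.
Qed.

Lemma Rsup_ub (E : R -> Prop) x : bound E -> E x -> x <= Rsup E.
Proof.
  intros Hb Ex. destruct (completeness E Hb (ex_intro _ x Ex)) as [M HM].
  apply (epsilon_spec (inhabits 0) (fun s => is_lub E s) (ex_intro _ M HM)), Ex.
Qed.

(** * Projection onto the span of an orthonormal family *)

Definition span_proj {H : Hilbert} (v : nat -> H) k (x : H) : H :=
  vsum1 k (fun i => hscal (hinner x (v i)) (v i)).

Lemma span_sub {H : Hilbert} (v : nat -> H) k p q :
  span1 v k p -> span1 v k q -> span1 v k (hsub p q).
Proof.
  intros [c ->] [e ->]. exists (fun i => c i - e i). apply hext; intros w.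
  rewrite inner_subl, !inner_vsum, <- sum1_minus. apply sum1_ext; intros.
  rewrite !hinner_scal. ring.
Qed.

Section SpanProjection.
Context {H : Hilbert} (v : nat -> H) (n : nat).
Hypothesis v_orth : forall i j, (1 <= i <= n)%nat -> (1 <= j <= n)%nat ->
  hinner (v i) (v j) = if Nat.eqb i j then 1 else 0.

Lemma span_proj_in_span k x : span1 v k (span_proj v k x).
Proof. exists (fun i => hinner x (v i)). reflexivity. Qed.

Lemma span_basis_in_span j : (1 <= j <= n)%nat -> span1 v n (v j).
Proof.
  intros Hj. exists (fun i => if Nat.eqb i j then 1 else 0). apply hext; intros w.
  rewrite inner_vsum, <- (sum1_delta n (fun i => hinner (v i) w) j Hj).
  apply sum1_ext; intros. rewrite hinner_scal. ring.
Qed.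

Lemma inner_span_basis k c j : (k <= n)%nat -> (1 <= j <= k)%nat ->
  hinner (vsum1 k (fun i => hscal (c i) (v i))) (v j) = c j.
Proof.
  intros Hk Hj. rewrite inner_vsum, <- (sum1_delta k c j Hj).
  apply sum1_ext; intros. rewrite hinner_scal, v_orth by lia. reflexivity.
Qed.

Lemma inner_span_eq0 k w y : (k <= n)%nat ->
  (forall i, (1 <= i <= k)%nat -> hinner w (v i) = 0) -> span1 v k y -> hinner w y = 0.
Proof.
  intros Hk Hw [c ->]. rewrite hinner_sym, inner_vsum. apply sum1_zero; intros.
  rewrite hinner_scal, hinner_sym, Hw by lia. ring.
Qed.

Lemma span_proj_residual_basis k x j : (k <= n)%nat -> (1 <= j <= k)%nat ->
  hinner (hsub x (span_proj v k x)) (v j) = 0.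
Proof. intros. rewrite inner_subl. unfold span_proj. rewrite inner_span_basis by lia. ring. Qed.

Lemma span_proj_residual_orth k l x y : (l <= k <= n)%nat -> span1 v l y ->
  hinner (hsub x (span_proj v k x)) y = 0.
Proof.
  intros Hlk. apply inner_span_eq0; [lia|]. intros; apply span_proj_residual_basis; lia.
Qed.

Lemma inner_span_expand p w : span1 v n p ->
  hinner p w = sum1 n (fun i => hinner p (v i) * hinner (v i) w).
Proof.
  intros [c Hc]. rewrite Hc at 1. rewrite inner_vsum. apply sum1_ext; intros i Hi.
  rewrite Hc, inner_span_basis, hinner_scal by lia. reflexivity.
Qed.

Lemma hdist_span k x : (k <= n)%nat -> hdist x (span1 v k) = hnorm (hsub x (span_proj v k x)).
Proof.
  intros Hk. apply Rinf_min.
  - exists (span_proj v k x). split; [apply span_proj_in_span | reflexivity].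
  - intros d [y [Hy ->]]. rewrite (hsub_split x (span_proj v k x) y), hadd_comm.
    apply hnorm_le_add_orth. rewrite hinner_sym, inner_subr.
    rewrite !(span_proj_residual_orth k k x) by (auto using span_proj_in_span). ring.
Qed.

Lemma orth_proj_span x : orth_proj (span1 v n) x = span_proj v n x.
Proof.
  set (p := orth_proj (span1 v n) x).
  assert (Hspec : span1 v n p /\ forall y, span1 v n y -> hinner (hsub x p) y = 0).
  { unfold p, orth_proj. apply epsilon_spec. exists (span_proj v n x). split; [apply span_proj_in_span|].
    intros y. apply (span_proj_residual_orth n n); lia. }
  destruct Hspec as [Hp Hperp].
  apply hext; intros w. unfold span_proj.
  rewrite inner_span_expand, inner_vsum by exact Hp. apply sum1_ext; intros i Hi.
  assert (Hcoord : hinner p (v i) = hinner x (v i)).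
  { pose proof (Hperp (v i) (span_basis_in_span i Hi)) as E. rewrite inner_subl in E. lra. }
  rewrite hinner_scal, Hcoord. reflexivity.
Qed.

(* Projecting onto V_n keeps the coordinates on v_1..v_k and removes a component
   orthogonal to V_k, so it cannot increase the distance to V_k. *)
Lemma hdist_span_proj_le k x : (k <= n)%nat ->
  hdist (span_proj v n x) (span1 v k) <= hdist x (span1 v k).
Proof.
  intros Hk. rewrite !hdist_span by exact Hk.
  assert (Hcoord : span_proj v k (span_proj v n x) = span_proj v k x).
  { apply vsum1_ext; intros i Hi. unfold span_proj at 1.
    rewrite inner_span_basis by lia. reflexivity. }
  rewrite Hcoord, (hsub_split x (span_proj v n x)).
  apply hnorm_le_add_orth. rewrite inner_subr.
  rewrite (span_proj_residual_orth n n x), (span_proj_residual_orth n k x);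
    [ring | lia | apply span_proj_in_span | lia | apply span_proj_in_span].
Qed.

End SpanProjection.

(** * The constant gamma *)

Definition gain {H : Hilbert} (S : H -> Prop) (r : nat -> H) (m : nat) : R :=
  Rsup (fun s => exists w : H, (forall y, S y -> hinner w y = 0) /\ hnorm w = 1 /\
          s = sqrt (sum1 m (fun j => (hinner (r j) w) ^ 2))).

Section Gain.
Context {H : Hilbert} (S : H -> Prop) (r : nat -> H) (m : nat).

(* The crude bound 2 |<r, w>| <= <r, r> + 1 for unit w makes the sup defining gamma finite. *)
Lemma sum_inner_sq_unit_le w : hnorm w = 1 ->
  sum1 m (fun j => hinner (r j) w ^ 2) <= sum1 m (fun j => ((hinner (r j) (r j) + 1) / 2) ^ 2).
Proof.
  intros Hw. assert (W1 : hinner w w = 1) by (rewrite <- hnorm_sq, Hw; ring).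
  apply sum1_le; intros j _.
  pose proof (hinner_pos _ (hsub (r j) w)) as P1. pose proof (hinner_pos _ (hadd (r j) w)) as P2.
  rewrite inner_sub_sub, W1 in P1. rewrite inner_add_add, W1 in P2. nra.
Qed.

Lemma sum_inner_sq_scal c w :
  sum1 m (fun j => hinner (r j) (hscal c w) ^ 2) = c ^ 2 * sum1 m (fun j => hinner (r j) w ^ 2).
Proof. rewrite <- sum1_scal. apply sum1_ext; intros. rewrite inner_scalr. ring. Qed.

Lemma sum_inner_sq_le_gain d : (forall y, S y -> hinner d y = 0) ->
  sum1 m (fun j => hinner (r j) d ^ 2) <= gain S r m ^ 2 * hnorm d ^ 2.
Proof.
  intros Hd. destruct (Req_dec (hinner d d) 0) as [D0 | D0].
  { apply hinner_def in D0. subst d. rewrite sum1_zero.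
    - apply Rmult_le_pos; apply pow2_ge_0.
    - intros; rewrite inner_0r; ring. }
  set (N := hnorm d).
  assert (N2 : N ^ 2 = hinner d d) by apply hnorm_sq.
  assert (Np : 0 < N) by (apply sqrt_lt_R0; pose proof (hinner_pos _ d); lra).
  set (w := hscal (/ N) d).
  assert (Hw : hnorm w = 1).
  { unfold hnorm, w. rewrite hinner_scal, inner_scalr, <- N2.
    replace (/ N * (/ N * N ^ 2)) with 1 by (field; lra). apply sqrt_1. }
  set (Sw := sum1 m (fun j => hinner (r j) w ^ 2)).
  assert (Hsqrt : sqrt Sw <= gain S r m).
  { apply Rsup_ub.
    - exists (sqrt (sum1 m (fun j => ((hinner (r j) (r j) + 1) / 2) ^ 2))).
      intros s [w' [_ [Hw' ->]]]. apply sqrt_le_1_alt, sum_inner_sq_unit_le, Hw'.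
    - exists w. repeat split; [|exact Hw]. intros y Hy. unfold w. rewrite hinner_scal, Hd; [ring|exact Hy]. }
  assert (Sw0 : 0 <= Sw) by (apply sum1_nonneg; intros; apply pow2_ge_0).
  assert (HSw : Sw <= gain S r m ^ 2).
  { rewrite <- (pow2_sqrt Sw) by exact Sw0. apply pow_incr. split; [apply sqrt_pos | exact Hsqrt]. }
  assert (Hd_w : sum1 m (fun j => hinner (r j) d ^ 2) = N ^ 2 * Sw).
  { unfold Sw, w. rewrite sum_inner_sq_scal. field. lra. }
  rewrite Hd_w. apply (Rmult_le_compat_l (N ^ 2)) in HSw; [lra | apply pow2_ge_0].
Qed.

End Gain.

(** * Diagonalisation by the singular value decomposition *)

Definition basis_change {H : Hilbert} (v : nat -> H) (X : nat -> nat -> R) n j : H :=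
  vsum1 n (fun i => hscal (X i j) (v i)).

Section SingularBasis.
Context {H : Hilbert} (n m : nat) (v r : nat -> H) (G U X : nat -> nat -> R) (sigma : nat -> R).
Hypothesis v_orth : forall i j, (1 <= i <= n)%nat -> (1 <= j <= n)%nat ->
  hinner (v i) (v j) = if Nat.eqb i j then 1 else 0.
Hypothesis G_def : forall i j, (1 <= i <= m)%nat -> (1 <= j <= n)%nat ->
  G i j = hinner (r i) (v j).
Hypothesis U_orth1 : forall i j, (1 <= i <= m)%nat -> (1 <= j <= m)%nat ->
  sum1 m (fun k => U k i * U k j) = if Nat.eqb i j then 1 else 0.
Hypothesis X_orth2 : forall i j, (1 <= i <= n)%nat -> (1 <= j <= n)%nat ->
  sum1 n (fun k => X i k * X j k) = if Nat.eqb i j then 1 else 0.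
Hypothesis G_svd : forall i j, (1 <= i <= m)%nat -> (1 <= j <= n)%nat ->
  G i j = sum1 n (fun k => U i k * sigma k * X j k).

Let vstar := basis_change v X n.

Lemma inner_basis_change j p :
  hinner (vstar j) p = sum1 n (fun i => X i j * hinner p (v i)).
Proof.
  unfold vstar, basis_change. rewrite inner_vsum. apply sum1_ext; intros.
  rewrite hinner_scal, (hinner_sym _ (v _)). reflexivity.
Qed.

Lemma basis_change_expand p : span1 v n p ->
  p = vsum1 n (fun j => hscal (hinner (vstar j) p) (vstar j)).
Proof.
  intros Hp. apply hext; intros w. rewrite (inner_span_expand v n v_orth p w Hp), inner_vsum.
  rewrite <- (sum1_orthonormal_cols n n (fun j i => X i j) (fun i => hinner p (v i))
                (fun i => hinner (v i) w)) by (intros; apply X_orth2; lia).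
  apply sum1_ext; intros j _. rewrite hinner_scal, inner_basis_change. f_equal.
  unfold vstar, basis_change. rewrite inner_vsum. apply sum1_ext; intros.
  symmetry; apply hinner_scal.
Qed.

Lemma inner_riesz_svd i p : (1 <= i <= m)%nat -> span1 v n p ->
  hinner (r i) p = sum1 n (fun l => U i l * (sigma l * hinner (vstar l) p)).
Proof.
  intros Hi Hp. rewrite hinner_sym, (inner_span_expand v n v_orth p _ Hp).
  transitivity (sum1 n (fun k => sum1 n (fun l => hinner p (v k) * (U i l * sigma l * X k l)))).
  { apply sum1_ext; intros k Hk.
    rewrite (hinner_sym _ (v k)), <- G_def, G_svd, sum1_scal by lia. reflexivity. }
  rewrite sum1_swap. apply sum1_ext; intros l _.
  rewrite inner_basis_change, <- !sum1_scal. apply sum1_ext; intros. ring.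
Qed.

Lemma sum_inner_sq_svd p : (n <= m)%nat -> span1 v n p ->
  sum1 m (fun i => hinner (r i) p ^ 2) = sum1 n (fun l => sigma l ^ 2 * hinner (vstar l) p ^ 2).
Proof.
  intros Hnm Hp.
  transitivity (sum1 m (fun i => sum1 n (fun l => U i l * (sigma l * hinner (vstar l) p))
                               * sum1 n (fun l => U i l * (sigma l * hinner (vstar l) p)))).
  { apply sum1_ext; intros i Hi. rewrite inner_riesz_svd by assumption. ring. }
  rewrite sum1_orthonormal_cols by (intros; apply U_orth1; lia).
  apply sum1_ext; intros. ring.
Qed.

End SingularBasis.
Theorem mainTheorem3
  (H : Hilbert) (a : H -> H -> R) (b : H -> R)
  (a_lin_l : forall x y w, a (hadd x y) w = a x w + a y w)
  (a_scal_l : forall c x w, a (hscal c x) w = c * a x w)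
  (a_lin_r : forall w x y, a w (hadd x y) = a w x + a w y)
  (a_scal_r : forall c w x, a w (hscal c x) = c * a w x)
  (b_lin : forall x y, b (hadd x y) = b x + b y)
  (b_scal : forall c x, b (hscal c x) = c * b x)
  (n m : nat) (Hnm : (n <= m)%nat)
  (v : nat -> H)
  (v_orth : forall i j, (1 <= i <= n)%nat -> (1 <= j <= n)%nat ->
             hinner (v i) (v j) = if Nat.eqb i j then 1 else 0)
  (z : nat -> H)
  (z_orth : forall i j, (1 <= i <= m)%nat -> (1 <= j <= m)%nat ->
             hinner (z i) (z j) = if Nat.eqb i j then 1 else 0)
  (r : nat -> H)
  (r_riesz : forall j, (1 <= j <= m)%nat -> forall w, a w (z j) = hinner (r j) w)
  (G : nat -> nat -> R)
  (G_def : forall i j, (1 <= i <= m)%nat -> (1 <= j <= n)%nat -> G i j = hinner (r i) (v j))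
  (U X : nat -> nat -> R) (sigma : nat -> R)
  (U_orth1 : forall i j, (1 <= i <= m)%nat -> (1 <= j <= m)%nat ->
             sum1 m (fun k => U k i * U k j) = if Nat.eqb i j then 1 else 0)
  (U_orth2 : forall i j, (1 <= i <= m)%nat -> (1 <= j <= m)%nat ->
             sum1 m (fun k => U i k * U j k) = if Nat.eqb i j then 1 else 0)
  (X_orth1 : forall i j, (1 <= i <= n)%nat -> (1 <= j <= n)%nat ->
             sum1 n (fun k => X k i * X k j) = if Nat.eqb i j then 1 else 0)
  (X_orth2 : forall i j, (1 <= i <= n)%nat -> (1 <= j <= n)%nat ->
             sum1 n (fun k => X i k * X j k) = if Nat.eqb i j then 1 else 0)
  (sigma_mono : forall j, (1 <= j < n)%nat -> sigma (S j) <= sigma j)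
  (sigma_nonneg : forall j, (1 <= j <= n)%nat -> 0 <= sigma j)
  (G_svd : forall i j, (1 <= i <= m)%nat -> (1 <= j <= n)%nat ->
             G i j = sum1 n (fun k => U i k * sigma k * X j k))
  (epshat : nat -> R) (epshat_pos : forall k, (k <= n)%nat -> 0 < epshat k)
  (zstar : H)
  (zstar_eq : forall w, a zstar w = b w)
  (zstar_dist : forall k, (k <= n)%nat -> hdist zstar (span1 v k) <= epshat k)
  (zMS : H) :
  let f := fun w : H => sum1 m (fun j => (b (z j) - a w (z j)) ^ 2) in
  let feasible := fun w : H => span1 v n w /\
        forall k, (k <= n)%nat -> hdist w (span1 v k) <= epshat k in
  feasible zMS ->
  (forall w, feasible w -> f zMS <= f w) ->
  let eps_n := hdist zstar (span1 v n) in
  let gamma := Rsup (fun s => exists w : H,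
        (forall y, span1 v n y -> hinner w y = 0) /\ hnorm w = 1 /\
        s = sqrt (sum1 m (fun j => (hinner (r j) w) ^ 2))) in
  let Pz := orth_proj (span1 v n) zstar in
  let vstar := fun j => vsum1 n (fun i => hscal (X i j) (v i)) in
  let beta := fun j => hinner (vstar j) (hsub Pz zMS) in
  f Pz <= gamma ^ 2 * eps_n ^ 2 /\
  f zMS <= gamma ^ 2 * eps_n ^ 2 /\
  hsub Pz zMS = vsum1 n (fun j => hscal (beta j) (vstar j)) /\
  sum1 n (fun j => sigma j ^ 2 * beta j ^ 2) <= 4 * gamma ^ 2 * eps_n ^ 2.
Proof.
  intros f feasible [HzMS_span _] Hmin eps_n gamma Pz vstar beta.
  assert (Hf : forall w, f w = sum1 m (fun j => hinner (r j) (hsub zstar w) ^ 2)).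
  { intros w. apply sum1_ext; intros j Hj. rewrite <- zstar_eq, !r_riesz, inner_subr by lia.
    reflexivity. }
  assert (HPz : Pz = span_proj v n zstar) by (apply orth_proj_span, v_orth).
  assert (HPz_span : span1 v n Pz) by (rewrite HPz; apply span_proj_in_span).
  assert (Hfeas : feasible Pz).
  { split; [exact HPz_span|]. intros k Hk. rewrite HPz.
    eapply Rle_trans; [apply hdist_span_proj_le | apply zstar_dist]; assumption. }
  assert (HfPz : f Pz <= gamma ^ 2 * eps_n ^ 2).
  { rewrite Hf. unfold eps_n. rewrite (hdist_span v n v_orth n zstar), <- HPz by lia.
    apply sum_inner_sq_le_gain. intros y Hy.
    rewrite HPz. apply (span_proj_residual_orth v n v_orth n n); [lia | exact Hy]. }
  pose proof (Hmin Pz Hfeas) as HfzMS.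
  assert (Hdiff_span : span1 v n (hsub Pz zMS)) by (apply span_sub; assumption).
  split; [exact HfPz | split; [lra | split]].
  - apply basis_change_expand; assumption.
  - unfold beta, vstar. rewrite <- (sum_inner_sq_svd n m v r G U X sigma) by assumption.
    rewrite (sum1_ext m _ (fun i => (hinner (r i) (hsub zstar zMS) - hinner (r i) (hsub zstar Pz)) ^ 2))
      by (intros; rewrite !inner_subr; ring).
    eapply Rle_trans; [apply sum1_sq_sub_le|]. cbv beta. rewrite <- !Hf. lra.
Qed.
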